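(* Under the setup in the context, assume in addition that the block GMRES residual $F_{j-1}^{(G)}$ has rank $L$. Then $H_j$ is singular with $\operatorname{rank}H_j=(j-1)L$ if and only if block GMRES totally stagnates at step $j$, i.e. $X_j^{(G)}=X_{j-1}^{(G)}$.
   Context: Let $n,L\ge1$, $A\in\mathbb C^{n\times n}$, $B,X_0\in\mathbb C^{n\times L}$, $F_0=B-AX_0$, and let $F_0=V_1S_0$ be a reduced QR factorization ($V_1\in\mathbb C^{n\times L}$ with orthonormal columns, $S_0\in\mathbb C^{L\times L}$ upper triangular). Fix $j\ge2$. The block Arnoldi process (possibly with dependent basis vectors replaced by new orthonormal vectors) yields $W_k=[V_1,\dots,V_k]\in\mathbb C^{n\times kL}$ ($k\le j+1$) with orthonormal columns, $V_i\in\mathbb C^{n\times L}$, and the block Arnoldi relation $AW_j=W_{j+1}\bar H_j$, where $\bar H_j=(H_{ik})\in\mathbb C^{(j+1)L\times jL}$ has $L\times L$ blocks $H_{ik}$, is block upper Hessenberg ($H_{ik}=0$ for $i>k+1$), and each $H_{k+1,k}$ is upper triangular. For $k\le j$, $\bar H_k$ denotes the leading $(k+1)L\times kL$ submatrix of $\bar H_j$ and $H_k$ the leading $kL\times kL$ submatrix. $E^{[m]}\in\mathbb R^{mL\times L}$ denotes the first $L$ columns of $I_{mL}$. Assume $\bar H_j$ has full column rank (hence so does each $\bar H_k$, $k\le j$). For $k\ge1$, the block GMRES iterate is $X_k^{(G)}=X_0+W_kY_k^{(G)}$, where $Y_k^{(G)}\in\mathbb C^{kL\times L}$ is the unique minimizer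 of $\|\bar H_kY-E^{[k+1]}S_0\|_F$ (Frobenius norm), and $F_k^{(G)}=B-AX_k^{(G)}$. *)

From HB Require Import structures.
From mathcomp Require Import all_boot all_order all_algebra.
Set Implicit Arguments. Unset Strict Implicit. Unset Printing Implicit Defensive.
Import Order.TTheory GRing.Theory Num.Theory.
Local Open Scope ring_scope.

Section Defs.
Variable C : numClosedFieldType.

Definition ctmx {m n} (M : 'M[C]_(m, n)) : 'M[C]_(n, m) := (map_mx Num.conj M)^T.

(* leading p x q submatrix (entries outside M are 0; only used with p <= m, q <= n) *)
Definition lsub {m n} (p q : nat) (M : 'M[C]_(m, n)) : 'M[C]_(p, q) :=
  \matrix_(i < p, k < q)
    (if @insub nat (fun x => x < m)%N 'I_m (val i) is Some i' then
       if @insub nat (fun x => x < n)%N 'I_n (val k) is Some k' then M i' k' else 0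
     else 0).

Definition Efirst (m L : nat) : 'M[C]_(m * L, L) :=
  \matrix_(i < m * L, k < L) (val i == val k)%:R.

Definition frob {m n} (M : 'M[C]_(m, n)) : C :=
  sqrtC (\sum_(i < m) \sum_(k < n) `|M i k| ^+ 2).

Definition upper_tri {L} (S : 'M[C]_L) : Prop :=
  forall i k : 'I_L, (k < i)%N -> S i k = 0.

(* block upper Hessenberg with L x L blocks and upper triangular subdiagonal blocks *)
Definition block_hess_ut (L : nat) {m n} (H : 'M[C]_(m, n)) : Prop :=
  forall (r : 'I_m) (c : 'I_n),
    [|| ((c %/ L)%N.+1 < (r %/ L)%N)%N
      | (((r %/ L)%N == (c %/ L)%N.+1) && ((c %% L)%N < (r %% L)%N)%N)] ->
    H r c = 0.

Definition Hbar_k (L k : nat) {m n} (Hb : 'M[C]_(m, n)) : 'M[C]_(k.+1 * L, k * L) :=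
  lsub (k.+1 * L) (k * L) Hb.

Definition gmres_min (L k : nat) {m n} (Hb : 'M[C]_(m, n)) (S0 : 'M[C]_L)
    (Y : 'M[C]_(k * L, L)) : Prop :=
  forall Y' : 'M[C]_(k * L, L),
    frob (Hbar_k L k Hb *m Y - Efirst k.+1 L *m S0)
      <= frob (Hbar_k L k Hb *m Y' - Efirst k.+1 L *m S0).

End Defs.
Arguments gmres_min {C} L k {m n} Hb S0 Y.

From HB Require Import structures.
From mathcomp Require Import all_boot all_order all_algebra zify.
Import Order.TTheory GRing.Theory Num.Theory.
Local Open Scope ring_scope.

(** Write [W_k] for the leading [kL] columns of [W] and [r] for the projected
residual [E S_0 - \bar H_{j-1} Y_{j-1}], so that [F_{j-1} = W_j r] and
[rank r = L].  Since [\bar H_j] restricted to its first [(j-1)L] columns is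
[\bar H_{j-1}] padded by zero rows, the normal equations of step [j] evaluated
at the previous iterate leave exactly the defect [-H_j^* r]; hence block GMRES
stagnates iff [H_j^* r = 0].  The normal equations of step [j-1] say that the
first [(j-1)L] columns of [H_j], which are independent, are orthogonal to [r];
as [r] has [L] independent columns, [H_j^* r = 0] holds iff the remaining
columns of [H_j] add nothing to its rank, i.e. [rank H_j = (j-1)L]. *)

Section ConjugateTranspose.
Context {C : numClosedFieldType}.

Lemma ctmx_mul {m n p} (A : 'M[C]_(m, n)) (B : 'M[C]_(n, p)) :
  ctmx (A *m B) = ctmx B *m ctmx A.
Proof. by rewrite /ctmx map_mxM trmx_mul. Qed.

Lemma ctmxK {m n} (A : 'M[C]_(m, n)) : ctmx (ctmx A) = A.
Proof. by apply/matrixP => i k; rewrite !mxE conjCK. Qed.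

Lemma ctmxD {m n} (A B : 'M[C]_(m, n)) : ctmx (A + B) = ctmx A + ctmx B.
Proof. by apply/matrixP => i k; rewrite !mxE rmorphD. Qed.

Lemma ctmx0 {m n} : ctmx (0 : 'M[C]_(m, n)) = 0.
Proof. by apply/matrixP => i k; rewrite !mxE rmorph0. Qed.

Lemma mxrank_ctmx {m n} (A : 'M[C]_(m, n)) : \rank (ctmx A) = \rank A.
Proof. by rewrite /ctmx mxrank_tr mxrank_map. Qed.

Lemma mxrank_isometry {m n p} (U : 'M[C]_(m, n)) (M : 'M[C]_(n, p)) :
  ctmx U *m U = 1%:M -> \rank (U *m M) = \rank M.
Proof.
move=> UU1; apply/eqP; rewrite eqn_leq mxrankM_maxr /=.
by rewrite -{1}(mul1mx M) -UU1 -mulmxA mxrankM_maxr.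
Qed.

Lemma isometry_mulmx_inj {m n p} {U : 'M[C]_(m, n)} :
  ctmx U *m U = 1%:M -> injective (@mulmx _ m n p U).
Proof. by move=> UU1 M N /(congr1 (mulmx (ctmx U))); rewrite !mulmxA UU1 !mul1mx. Qed.

End ConjugateTranspose.

Section FrobeniusNorm.
Context {C : numClosedFieldType}.

Definition frob_sq {m n} (M : 'M[C]_(m, n)) : C := \tr (ctmx M *m M).

Lemma frob_sqE {m n} (M : 'M[C]_(m, n)) :
  frob_sq M = \sum_(i < m) \sum_(k < n) `|M i k| ^+ 2.
Proof.
rewrite /frob_sq /mxtrace exchange_big; apply: eq_bigr => k _.
by rewrite mxE; apply: eq_bigr => i _; rewrite !mxE normCKC.
Qed.

Lemma frobE {m n} (M : 'M[C]_(m, n)) : frob M = sqrtC (frob_sq M).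
Proof. by rewrite /frob frob_sqE. Qed.

Lemma frob_sq_ge0 {m n} (M : 'M[C]_(m, n)) : 0 <= frob_sq M.
Proof. by rewrite frob_sqE; do 2![apply: sumr_ge0 => ? _]; apply: exprn_ge0. Qed.

Lemma frob_sq_eq0 {m n} (M : 'M[C]_(m, n)) : frob_sq M = 0 -> M = 0.
Proof.
have sq_ge0 i k : 0 <= `|M i k| ^+ 2 by apply: exprn_ge0.
rewrite frob_sqE => /psumr_eq0P sum0; apply/matrixP => i k; rewrite mxE.
have /psumr_eq0P row0 := sum0 (fun i _ => sumr_ge0 _ (fun k _ => sq_ge0 i k)) i isT.
by have /eqP := row0 (fun k _ => sq_ge0 i k) k isT; rewrite expf_eq0 normr_eq0 => /eqP.
Qed.

Lemma gram_eq0 {m n} (M : 'M[C]_(m, n)) : ctmx M *m M = 0 -> M = 0.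
Proof. by move=> MM0; apply: frob_sq_eq0; rewrite /frob_sq MM0 mxtrace0. Qed.

Lemma frob_sqD_orth {m n} (A B : 'M[C]_(m, n)) :
  ctmx A *m B = 0 -> frob_sq (A + B) = frob_sq A + frob_sq B.
Proof.
move=> AB0; have BA0 : ctmx B *m A = 0 by rewrite -[A]ctmxK -ctmx_mul AB0 ctmx0.
by rewrite /frob_sq ctmxD mulmxDl !mulmxDr AB0 BA0 addr0 add0r mxtraceD.
Qed.

End FrobeniusNorm.

Section LeastSquares.
Context {C : numClosedFieldType} {a b : nat} {G : 'M[C]_(a, b)}.
Hypothesis rankG : \rank G = b.

Lemma mulmx_col_free_eq0 {c} (v : 'M[C]_(b, c)) : G *m v = 0 -> v = 0.
Proof.
have freeGT : row_free G^T by rewrite /row_free mxrank_tr rankG.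
move=> Gv0; apply: trmx_inj; apply: (row_free_inj freeGT).
by rewrite -trmx_mul Gv0 !trmx0 mul0mx.
Qed.

Lemma gram_unitmx : ctmx G *m G \in unitmx.
Proof.
rewrite -row_free_unit -kermx_eq0; set K := kermx _.
have GK0 : G *m ctmx K = 0.
  apply: gram_eq0.
  by rewrite ctmx_mul ctmxK mulmxA -(mulmxA K) mulmx_ker mul0mx.
by rewrite -[K]ctmxK (mulmx_col_free_eq0 _ GK0) ctmx0.
Qed.

Lemma normal_eq_uniq {c} {R : 'M[C]_(a, c)} {Y : 'M[C]_(b, c)} :
  ctmx G *m (G *m Y - R) = 0 ->
  forall Y' : 'M[C]_(b, c), ctmx G *m (G *m Y' - R) = 0 <-> Y' = Y.
Proof.
move=> normY Y'; split=> [normY'|-> //]; apply/eqP; rewrite -subr_eq0; apply/eqP.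
rewrite -(mulKmx gram_unitmx (Y' - Y)) -[_ *m (Y' - Y)]mulmxA mulmxBr.
have -> : G *m Y' - G *m Y = (G *m Y' - R) - (G *m Y - R) by rewrite opprB addrA subrK.
by rewrite mulmxBr normY normY' subrr mulmx0.
Qed.

Lemma lsq_normal_eq {c} {R : 'M[C]_(a, c)} {Y : 'M[C]_(b, c)} :
  (forall Y' : 'M[C]_(b, c), frob (G *m Y - R) <= frob (G *m Y' - R)) ->
  ctmx G *m (G *m Y - R) = 0.
Proof.
move=> Ymin; pose Ys := invmx (ctmx G *m G) *m (ctmx G *m R).
have normYs : ctmx G *m (G *m Ys - R) = 0.
  by rewrite mulmxBr mulmxA /Ys mulmxA mulmxV ?gram_unitmx // mul1mx subrr.
have splitY : G *m Y - R = G *m (Y - Ys) + (G *m Ys - R).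
  by rewrite mulmxBr addrA subrK.
have orthY : ctmx (G *m (Y - Ys)) *m (G *m Ys - R) = 0.
  by rewrite ctmx_mul -mulmxA normYs mulmx0.
have := Ymin Ys; rewrite !frobE ler_sqrtC ?nnegrE ?frob_sq_ge0 //.
rewrite splitY (frob_sqD_orth _ _ orthY) gerDr => le0.
have GY0 : frob_sq (G *m (Y - Ys)) = 0 by apply/eqP; rewrite eq_le le0 frob_sq_ge0.
have /eqP := mulmx_col_free_eq0 _ (frob_sq_eq0 _ GY0).
by rewrite subr_eq0 => /eqP ->; rewrite subrr mulmx0 add0r.
Qed.

End LeastSquares.

Section LeadingBlocks.
Context {C : numClosedFieldType}.

Definition idrect_mx a b : 'M[C]_(a, b) := \matrix_(i < a, k < b) (val i == val k)%:R.

Lemma lsubE {m n} p q (M : 'M[C]_(m, n)) (i : 'I_p) (k : 'I_q)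
    (im : (val i < m)%N) (kn : (val k < n)%N) :
  lsub p q M i k = M (Ordinal im) (Ordinal kn).
Proof.
rewrite /lsub mxE (insubT (fun x => x < m)%N im) (insubT (fun x => x < n)%N kn).
by congr (M _ _); apply: val_inj.
Qed.

Lemma lsub_out {m n} p q (M : 'M[C]_(m, n)) (i : 'I_p) (k : 'I_q) :
  (m <= val i)%N || (n <= val k)%N -> lsub p q M i k = 0.
Proof.
rewrite /lsub mxE => /orP[im | kn]; first by rewrite insubN // -leqNgt.
by case: insubP => // ? _ _; rewrite insubN // -leqNgt.
Qed.

Lemma lsub_mulmx_idrect {m n} q (M : 'M[C]_(m, n)) : lsub m q M = M *m idrect_mx n q.
Proof.
apply/matrixP => i k; rewrite [RHS]mxE.
have [kn | nk] := ltnP k n; last first.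
  rewrite lsub_out ?nk ?orbT // big1 // => l _; rewrite !mxE.
  by case: eqP => [lk | _]; [move: (ltn_ord l); rewrite lk ltnNge nk | rewrite mulr0].
rewrite (lsubE _ _ _ _ _ (ltn_ord i) kn) (bigD1 (Ordinal kn)) //= big1 => [|l lk].
  by rewrite !mxE eqxx mulr1 addr0; congr (M _ _); apply: val_inj.
by rewrite !mxE; case: eqP => [e | _]; [case/eqP: lk; apply: val_inj | rewrite mulr0].
Qed.

Lemma lsub_idrect_mulmx {m n} p (M : 'M[C]_(m, n)) : lsub p n M = idrect_mx p m *m M.
Proof.
apply/matrixP => i k; rewrite [RHS]mxE.
have [im | mi] := ltnP i m; last first.
  rewrite lsub_out ?mi // big1 // => l _; rewrite !mxE.
  by case: eqP => [il | _]; [move: (ltn_ord l); rewrite -il ltnNge mi | rewrite mul0r].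
rewrite (lsubE _ _ _ _ _ im (ltn_ord k)) (bigD1 (Ordinal im)) //= big1 => [|l li].
  by rewrite !mxE eqxx mul1r addr0; congr (M _ _); apply: val_inj.
by rewrite !mxE; case: eqP => [e | _]; [case/eqP: li; apply: val_inj | rewrite mul0r].
Qed.

Lemma lsub_lsub {m n} p q p' q' (M : 'M[C]_(m, n)) :
  (p <= p')%N -> (q <= q')%N -> lsub p q (lsub p' q' M) = lsub p q M.
Proof.
move=> pp qq; apply/matrixP => i k.
have ip : (val i < p')%N := leq_trans (ltn_ord i) pp.
have kq : (val k < q')%N := leq_trans (ltn_ord k) qq.
rewrite (lsubE _ _ _ _ _ ip kq).
have [kn | nk] := ltnP k n; last by rewrite !lsub_out ?nk ?orbT.
have [im | mi] := ltnP i m; last by rewrite !lsub_out ?mi.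
by rewrite (lsubE _ _ _ _ _ im kn) (lsubE _ _ _ (Ordinal ip) (Ordinal kq) im kn).
Qed.

Lemma lsub_lead_cols {m n p q q'} (M : 'M[C]_(m, n)) :
  (q <= q')%N -> lsub p q M = lsub p q' M *m idrect_mx q' q.
Proof. by move=> qq; rewrite -lsub_mulmx_idrect lsub_lsub. Qed.

Lemma idrect_mx1 a : idrect_mx a a = 1%:M.
Proof. by apply/matrixP => i j; rewrite !mxE val_eqE. Qed.

Lemma lsub_id {m n} (M : 'M[C]_(m, n)) : lsub m n M = M.
Proof. by rewrite lsub_mulmx_idrect idrect_mx1 mulmx1. Qed.

Lemma idrect_mx_mul a b c : (minn a c <= b)%N ->
  idrect_mx a b *m idrect_mx b c = idrect_mx a c.
Proof.
move=> abc; rewrite -lsub_mulmx_idrect; apply/matrixP => i k.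
have [kb | bk] := ltnP k b; first by rewrite (lsubE _ _ _ _ _ (ltn_ord i) kb) !mxE.
rewrite lsub_out ?bk ?orbT // mxE; case: eqP => // ik.
move: (leq_trans abc bk); rewrite geq_min -ik.
by rewrite leqNgt ltn_ord /= ik leqNgt ltn_ord.
Qed.

Lemma ctmx_idrect a b : ctmx (idrect_mx a b) = idrect_mx b a.
Proof. by apply/matrixP => i j; rewrite !mxE rmorph_nat eq_sym. Qed.

Lemma lsub_isometry {m n} q (W : 'M[C]_(m, n)) :
  (q <= n)%N -> ctmx W *m W = 1%:M -> ctmx (lsub m q W) *m lsub m q W = 1%:M.
Proof.
move=> qn isoW; rewrite lsub_mulmx_idrect ctmx_mul -mulmxA (mulmxA (ctmx W)) isoW.
by rewrite mul1mx ctmx_idrect idrect_mx_mul ?idrect_mx1 // minnn.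
Qed.

Lemma mxrank_idrect a b : (a <= b)%N -> \rank (idrect_mx a b) = a.
Proof.
move=> ab; apply/eqP; rewrite eqn_leq rank_leq_row /=.
rewrite -{1}(mxrank1 C a) -idrect_mx1 -(idrect_mx_mul a b a) ?minnn //.
exact: mxrankM_maxl.
Qed.

Lemma mxrank_idrect_tall a b : (b <= a)%N -> \rank (idrect_mx a b) = b.
Proof. by move=> ba; rewrite -mxrank_ctmx ctmx_idrect mxrank_idrect. Qed.

(* In matrix form: the first [pL] columns of [Hb] vanish below row [(p+1)L]. *)
Lemma block_hess_ut_lead_cols p L (Hb : 'M[C]_(p.+2 * L, p.+1 * L)) :
  (0 < L)%N -> block_hess_ut L Hb ->
  Hb *m idrect_mx _ (p * L)
    = idrect_mx _ (p.+1 * L) *m lsub (p.+1 * L) (p * L) Hb.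
Proof.
move=> L_gt0 hessHb; rewrite -lsub_mulmx_idrect -lsub_idrect_mulmx.
apply/matrixP => i k.
have kn : (val k < p.+1 * L)%N by apply: leq_trans (ltn_ord k) _; nia.
rewrite (lsubE _ _ _ _ _ (ltn_ord i) kn).
have [ip | pi] := ltnP i (p.+1 * L).
  rewrite (lsubE _ _ _ _ _ ip (ltn_ord k)).
  by rewrite (lsubE _ _ _ (Ordinal ip) (Ordinal (ltn_ord k)) (ltn_ord i) kn).
rewrite lsub_out ?pi //; apply: hessHb; apply/orP; left => /=.
have k_blk : (k %/ L < p)%N by rewrite ltn_divLR.
by apply: leq_trans (_ : p.+1 <= i %/ L)%N; rewrite ?ltnS ?leq_divRL.
Qed.

End LeadingBlocks.

Section RankCriterion.
Context {C : numClosedFieldType}.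

Lemma ctmx_mulmx_eq0_iff_mxrank {q k l} {H : 'M[C]_q} {P : 'M[C]_(q, k)}
    {r : 'M[C]_(q, l)} :
  (q <= k + l)%N -> \rank (H *m P) = k -> \rank r = l ->
  ctmx (H *m P) *m r = 0 ->
  ctmx H *m r = 0 <-> \rank H = k.
Proof.
move=> qkl rankHP rankr HPr0.
have k_le : (k <= \rank H)%N by rewrite -rankHP mxrankM_maxl.
split=> [Hr0 | rankH].
  apply/eqP; rewrite eqn_leq k_le andbT -(leq_add2r l); apply: leq_trans qkl.
  have := mxrank_mul_min (ctmx H) r.
  by rewrite Hr0 mxrank0 mxrank_ctmx rankr leqn0 subn_eq0.
have HP_H : ((H *m P)^T <= H^T)%MS by rewrite trmx_mul submxMl.
have [_] := mxrank_leqif_sup HP_H.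
rewrite !mxrank_tr rankHP rankH eqxx => /esym/submxP[D HD].
have -> : H = H *m P *m D^T by rewrite -[LHS]trmxK HD trmx_mul trmxK.
by rewrite ctmx_mul -mulmxA HPr0 mulmx0.
Qed.

End RankCriterion.

Section BlockGmresStep.
Context {C : numClosedFieldType} {n L p : nat}.
Context {A : 'M[C]_n} {B X0 : 'M[C]_(n, L)} {W : 'M[C]_(n, p.+2 * L)}
  {Hb : 'M[C]_(p.+2 * L, p.+1 * L)} {S0 : 'M[C]_L}
  {Yp : 'M[C]_(p * L, L)} {Yj : 'M[C]_(p.+1 * L, L)}.
Hypotheses (L_gt0 : (0 < L)%N) (isoW : ctmx W *m W = 1%:M)
  (F0E : B - A *m X0 = lsub n L W *m S0)
  (arnoldi : A *m lsub n (p.+1 * L) W = W *m Hb)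
  (hessHb : block_hess_ut L Hb) (rankHb : \rank Hb = (p.+1 * L)%N)
  (minYp : gmres_min L p Hb S0 Yp) (minYj : gmres_min L p.+1 Hb S0 Yj).

(* Here [j = p + 1]: [Gp] is [\bar H_{j-1}], [Pp] embeds its columns into those of
   [H_j], and [r] is the projected residual of step [j - 1]. *)
Local Notation Wj := (lsub n (p.+1 * L) W).
Local Notation Hj := (lsub (p.+1 * L) (p.+1 * L) Hb).
Local Notation Gp := (lsub (p.+1 * L) (p * L) Hb).
Local Notation Pp := (idrect_mx (p.+1 * L) (p * L)).
Local Notation r := (Efirst C p.+1 L *m S0 - Gp *m Yp).

Let pL_le : (p * L <= p.+1 * L)%N. Proof. nia. Qed.
Let p1L_le : (p.+1 * L <= p.+2 * L)%N. Proof. nia. Qed.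
Let L_le : (L <= p.+1 * L)%N. Proof. nia. Qed.

Let isoWj : ctmx Wj *m Wj = 1%:M. Proof. exact: lsub_isometry p1L_le isoW. Qed.

Lemma mxrank_Gp : \rank Gp = (p * L)%N.
Proof.
apply/eqP; rewrite eqn_leq rank_leq_col /=.
apply: leq_trans (mxrankM_maxr (idrect_mx (p.+2 * L) (p.+1 * L)) Gp).
rewrite -block_hess_ut_lead_cols //; apply: leq_trans (mxrank_mul_min _ _).
by rewrite rankHb mxrank_idrect_tall // addKn.
Qed.

Lemma Efirst_lead_rows :
  Efirst C p.+2 L = idrect_mx _ (p.+1 * L) *m Efirst C p.+1 L.
Proof. by rewrite /Efirst -[RHS]/(_ *m idrect_mx _ L) idrect_mx_mul //; nia. Qed.

Lemma residual_prev_eq : B - A *m (X0 + lsub n (p * L) W *m Yp) = Wj *m r.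
Proof.
have AWp : A *m lsub n (p * L) W = Wj *m Gp.
  rewrite (lsub_lead_cols _ pL_le) mulmxA arnoldi -mulmxA.
  by rewrite block_hess_ut_lead_cols // mulmxA -lsub_mulmx_idrect.
rewrite [in LHS]mulmxDr opprD addrA F0E mulmxA AWp (lsub_lead_cols _ L_le).
by rewrite -!mulmxA -mulmxBr.
Qed.

Lemma normal_eq_Yj : ctmx Hb *m (Hb *m Yj - Efirst C p.+2 L *m S0) = 0.
Proof.
by apply: (lsq_normal_eq rankHb); move: minYj; rewrite /gmres_min /Hbar_k lsub_id.
Qed.

Lemma normal_eq_Yp : ctmx Gp *m r = 0.
Proof. by rewrite -opprB mulmxN (lsq_normal_eq mxrank_Gp minYp) oppr0. Qed.

Lemma normal_eq_gap :
  ctmx Hb *m (Hb *m (Pp *m Yp) - Efirst C p.+2 L *m S0) = - (ctmx Hj *m r).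
Proof.
have ctHj : ctmx Hj = ctmx Hb *m idrect_mx _ (p.+1 * L).
  by rewrite lsub_idrect_mulmx ctmx_mul ctmx_idrect.
rewrite mulmxA block_hess_ut_lead_cols // Efirst_lead_rows -!mulmxA -mulmxBr.
by rewrite mulmxA -ctHj -opprB mulmxN.
Qed.

Lemma stagnation_iff :
  X0 + Wj *m Yj = X0 + lsub n (p * L) W *m Yp <-> ctmx Hj *m r = 0.
Proof.
rewrite (lsub_lead_cols _ pL_le) -mulmxA.
split=> [/addrI /(isometry_mulmx_inj isoWj) YjE | Hjr0].
  by apply/eqP; rewrite -oppr_eq0 -normal_eq_gap -YjE normal_eq_Yj.
congr (X0 + Wj *m _); apply: esym; apply/(normal_eq_uniq rankHb normal_eq_Yj).
by rewrite normal_eq_gap Hjr0 oppr0.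
Qed.

Lemma block_gmres_stagnation_iff :
  \rank (B - A *m (X0 + lsub n (p * L) W *m Yp)) = L ->
  (Hj \notin unitmx /\ \rank Hj = (p * L)%N)
    <-> X0 + Wj *m Yj = X0 + lsub n (p * L) W *m Yp.
Proof.
rewrite residual_prev_eq mxrank_isometry ?isoWj // => rankr.
have dimHj : (p.+1 * L <= p * L + L)%N by rewrite mulSn addnC.
have rankHjPp : \rank (Hj *m Pp) = (p * L)%N.
  by rewrite -(lsub_lead_cols _ pL_le) mxrank_Gp.
have HjPpr0 : ctmx (Hj *m Pp) *m r = 0.
  by rewrite -(lsub_lead_cols _ pL_le) normal_eq_Yp.
rewrite stagnation_iff (ctmx_mulmx_eq0_iff_mxrank dimHj rankHjPp rankr HjPpr0).
split=> [[] // | rankHj]; split=> //.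
by apply/negP => /mxrank_unit; rewrite rankHj => /eqP; nia.
Qed.

End BlockGmresStep.

Theorem mainTheorem6 (C : numClosedFieldType) (n L j : nat)
    (hL : (1 <= L)%N) (hn : (1 <= n)%N) (hj : (2 <= j)%N)
    (A : 'M[C]_n) (B X0 : 'M[C]_(n, L))
    (W : 'M[C]_(n, j.+1 * L)) (Hb : 'M[C]_(j.+1 * L, j * L)) (S0 : 'M[C]_L)
    (* W_{j+1} = [V_1, ..., V_{j+1}] has orthonormal columns *)
    (hW : ctmx W *m W = 1%:M)
    (* F_0 = B - A X_0 = V_1 S_0, S_0 upper triangular *)
    (hF0 : B - A *m X0 = lsub n L W *m S0)
    (hS0 : upper_tri S0)
    (* block Arnoldi relation A W_j = W_{j+1} \bar H_j *)
    (hArn : A *m lsub n (j * L) W = W *m Hb)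
    (hHess : block_hess_ut L Hb)
    (* \bar H_j has full column rank *)
    (hrank : \rank Hb = (j * L)%N)
    (* block GMRES iterates at steps j-1 and j *)
    (Yjm1 : 'M[C]_(j.-1 * L, L)) (Yj : 'M[C]_(j * L, L))
    (hYjm1 : gmres_min L j.-1 Hb S0 Yjm1)
    (hYj : gmres_min L j Hb S0 Yj)
    (* rank F_{j-1}^{(G)} = L *)
    (hFrank : \rank (B - A *m (X0 + lsub n (j.-1 * L) W *m Yjm1)) = L) :
  (lsub (j * L) (j * L) Hb \notin unitmx /\
     \rank (lsub (j * L) (j * L) Hb) = (j.-1 * L)%N)
  <-> X0 + lsub n (j * L) W *m Yj = X0 + lsub n (j.-1 * L) W *m Yjm1.
Proof.
case: j => [|p] // in hj W Hb hW hF0 hArn hHess hrank Yjm1 Yj hYjm1 hYj hFrank *.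
exact: (block_gmres_stagnation_iff hL hW hF0 hArn hHess hrank hYjm1 hYj hFrank).
Qed.
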